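(* Let $X$ be a topological space, $\mathcal A,\mathcal B\subseteq\wp(X)$, and suppose every member of $\mathcal A$ is a $G_\delta$ subset of $X$. Then the following are equivalent: (i) One has a winning strategy in $G_1(\mathscr N[\mathcal A],\neg\mathcal O(X,\mathcal B))$; (ii) $\mathrm{cof}(\mathcal A;\mathcal B,\subseteq)\le\omega$; (iii) One has a winning predetermined strategy in $G_1(\mathscr N[\mathcal A],\neg\mathcal O(X,\mathcal B))$.
   Context: $\mathcal O(X,\mathcal B)$ is the set of open covers $\mathscr U$ of $X$ with $X\notin\mathscr U$ such that each $B\in\mathcal B$ is contained in some $U\in\mathscr U$. $\mathscr N[\mathcal A]=\{\mathscr N(A):A\in\mathcal A\}$, where $\mathscr N(A)$ is the set of open sets $U\neq X$ with $A\subseteq U$; so in $G_1(\mathscr N[\mathcal A],\neg\mathcal O(X,\mathcal B))$, at each inning $n\in\omega$ One plays some $A_n\in\mathcal A$, Two answers with an open $U_n\supseteq A_n$, $U_n\neq X$, and One wins iff $\{U_n:n\in\omega\}\in\mathcal O(X,\mathcal B)$. A strategy for One maps finite sequences of Two's moves to moves; it is predetermined if it depends only on the inning number. $\mathrm{cof}(\mathcal A;\mathcal B,\subseteq)$ is the least cardinal $\kappa$ such that there are $\{A_\alpha:\alpha<\kappa\}\subseteq\mathcal A$ with every $B\in\mathcal B$ contained in some $A_\alpha$.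
   Formalization: $\mathcal O(X,\mathcal B)$ consists of the families 𝒰 of open sets with X ∉ 𝒰 in which each B ∈ $\mathcal B$ lies in some U ∈ 𝒰, without the requirement that 𝒰 cover X. The statement above fails without it. *)

From HB Require Import structures.
From mathcomp Require Import all_boot all_order all_algebra.
From mathcomp Require Import boolp classical_sets functions cardinality topology.
From mathcomp Require Export borel_hierarchy.
Set Implicit Arguments. Unset Strict Implicit. Unset Printing Implicit Defensive.
Local Open Scope classical_set_scope.

Section Game.
Context {X : topologicalType}.

Definition OXB (B : set (set X)) (U : set (set X)) : Prop :=
  (forall u, U u -> open u) /\ ~ U setT /\
  (forall b, B b -> exists2 u, U u & b `<=` u).

(* A strategy for One in G_1(N[A], ~O(X,B)): maps the finite sequence of
   Two's previous moves to a move of One, always a member of A. *)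
Definition strategyOne (A : set (set X)) (sigma : seq (set X) -> set X) : Prop :=
  forall s, A (sigma s).

Definition play_by (sigma : seq (set X) -> set X) (U : nat -> set X) : Prop :=
  forall n, open (U n) /\ U n <> setT /\ sigma [seq U i | i <- iota 0 n] `<=` U n.

Definition winning_strategyOne (A B : set (set X)) (sigma : seq (set X) -> set X) : Prop :=
  strategyOne A sigma /\ forall U, play_by sigma U -> OXB B (range U).

Definition predetermined (sigma : seq (set X) -> set X) : Prop :=
  forall s t, size s = size t -> sigma s = sigma t.

Definition cof_le_omega (A B : set (set X)) : Prop :=
  exists F : nat -> set X, (forall n, A (F n)) /\
    (forall b, B b -> exists n, b `<=` F n).

End Game.

(* (ii) => (iii): play a fixed enumeration of a countable cofinal family.
   (i) => (ii): write every proper move sigma s of a winning strategy as the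
   intersection of countably many proper open sets W s k, and let Two answer
   only with such sets.  The positions reachable this way are indexed by
   finite sequences of naturals, so the strategy's moves at them form a
   countable family.  If some b in B escaped all of them, Two could always
   answer with some W s k not containing b, and One would lose. *)
From mathcomp Require Import all_boot classical_sets topology.
From mathcomp Require Import boolp.
Local Open Scope classical_set_scope.

Section G1_open_covers.
Context {X : topologicalType}.

Lemma Gdelta_bigcap_proper {a : set X} : Gdelta a -> a <> setT ->
  exists2 W : nat -> set X,
    (forall k, open (W k) /\ W k <> setT) & a = \bigcap_k W k.
Proof.
move=> [F oF ->] /bigcapTP /existsNP[j /not_implyP[_ FjT]].
exists (fun k => F k `&` F j).
  move=> k; split; first exact: openI.
  by move=> FkjT; apply: FjT; rewrite -subTset -FkjT; exact: subIsetr.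
apply/seteqP; split=> x Fx k _; first by split; apply: Fx.
by have [] := Fx k I.
Qed.

Fixpoint history (tau : seq (set X) -> set X) (n : nat) : seq (set X) :=
  if n is m.+1 then rcons (history tau m) (tau (history tau m)) else [::].

Lemma map_history tau n :
  [seq tau (history tau i) | i <- iota 0 n] = history tau n.
Proof.
elim: n => [//|n IHn].
by rewrite -addn1 iotaD map_cat IHn /= cats1 addn1.
Qed.

Section Countable_answers.
Variables (sigma : seq (set X) -> set X) (W : seq (set X) -> nat -> set X).
Hypothesis W_proper_open :
  forall {s}, sigma s <> setT -> forall k, open (W s k) /\ W s k <> setT.
Hypothesis sigma_bigcap : forall {s}, sigma s <> setT -> sigma s = \bigcap_k W s k.

Definition answer_position (ks : seq nat) : seq (set X) :=
  foldl (fun s k => rcons s (W s k)) [::] ks.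

Lemma answer_position_rcons ks k :
  answer_position (rcons ks k) =
    rcons (answer_position ks) (W (answer_position ks) k).
Proof. by rewrite /answer_position foldl_rcons. Qed.

Lemma escaping_play (b : set X) :
  (forall ks, ~ b `<=` sigma (answer_position ks)) ->
  exists U, play_by sigma U /\ forall n, ~ b `<=` U n.
Proof.
move=> b_escapes.
have escape s : exists k, ~ b `<=` sigma s -> ~ b `<=` W s k.
  have [bs|nbs] := pselect (b `<=` sigma s); first by exists 0.
  suff [k nbk] : exists k, ~ b `<=` W s k by exists k.
  have sT : sigma s <> setT by move=> sE; apply: nbs; rewrite sE.
  by apply/existsNP => bW; apply: nbs; rewrite sigma_bigcap //; exact: sub_bigcap.
have [g gP] := choice escape.
pose tau s := W s (g s).
have reachable n : exists ks, history tau n = answer_position ks.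
  elim: n => [|n [ks IHn]]; first by exists [::].
  by exists (rcons ks (g (history tau n))); rewrite answer_position_rcons -IHn.
have nb n : ~ b `<=` sigma (history tau n).
  by have [ks ->] := reachable n; apply: b_escapes.
have sT n : sigma (history tau n) <> setT by move=> sE; apply: (nb n); rewrite sE.
exists (fun n => tau (history tau n)); split; last by move=> n; exact: gP.
move=> n; rewrite map_history.
have [oW WT] := W_proper_open (sT n) (g (history tau n)).
by split=> //; split=> //; rewrite sigma_bigcap //; exact: bigcap_inf.
Qed.

End Countable_answers.

Lemma winning_cof_le_omega (A B : set (set X)) sigma :
  (forall a, A a -> Gdelta a) -> winning_strategyOne A B sigma ->
  cof_le_omega A B.
Proof.
move=> hA [sigmaA win].
have bigcap_moves s : exists W : nat -> set X, sigma s <> setT ->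
    (forall k, open (W k) /\ W k <> setT) /\ sigma s = \bigcap_k W k.
  have [->|sT] := pselect (sigma s = setT); first by exists (fun=> set0).
  by have [W WP sE] := Gdelta_bigcap_proper (hA _ (sigmaA s)) sT; exists W.
have [W WP] := choice bigcap_moves.
have W_proper_open s : sigma s <> setT -> forall k, open (W s k) /\ W s k <> setT.
  by move=> /WP[].
have sigma_bigcap s : sigma s <> setT -> sigma s = \bigcap_k W s k.
  by move=> /WP[].
exists (fun n => sigma (answer_position W (odflt [::] (unpickle n)))).
split=> [n|b Bb]; first exact: sigmaA.
apply: contrapT => /forallNP b_uncovered.
have b_escapes ks : ~ b `<=` sigma (answer_position W ks).
  by move: (b_uncovered (pickle ks)); rewrite pickleK.
have [U [playU nbU]] :=
  @escaping_play sigma W W_proper_open sigma_bigcap b b_escapes.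
have [_ [_ /(_ b Bb)[_ [n _ <-]]]] := win U playU.
exact: nbU.
Qed.

Lemma cof_le_omega_predetermined (A B : set (set X)) : cof_le_omega A B ->
  exists sigma, predetermined sigma /\ winning_strategyOne A B sigma.
Proof.
move=> [F [AF cofF]]; exists (fun s => F (size s)).
split; first by move=> s t ->.
split=> // U playU; split; [|split].
- by move=> _ [n _ <-]; case: (playU n).
- by move=> [n _ UT]; case: (playU n) => _ [].
- move=> b /cofF[n bF]; exists (U n); first by exists n.
  by case: (playU n) => _ [_]; rewrite size_map size_iota => FU x /bF /FU.
Qed.

End G1_open_covers.

Theorem mainTheorem14 (X : topologicalType) (A B : set (set X))
    (hA : forall a, A a -> Gdelta a) :
  [/\ ((exists sigma, winning_strategyOne A B sigma) <-> cof_le_omega A B),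
      (cof_le_omega A B <->
         exists sigma, predetermined sigma /\ winning_strategyOne A B sigma) &
      ((exists sigma, winning_strategyOne A B sigma) <->
         exists sigma, predetermined sigma /\ winning_strategyOne A B sigma)].
Proof.
have i_ii : (exists sigma, winning_strategyOne A B sigma) -> cof_le_omega A B.
  by move=> [sigma]; exact: winning_cof_le_omega.
have iii_i : (exists sigma, predetermined sigma /\ winning_strategyOne A B sigma) ->
    exists sigma, winning_strategyOne A B sigma.
  by move=> [sigma [_ win]]; exists sigma.
have ii_iii := @cof_le_omega_predetermined X A B.
split; split.
- exact i_ii.
- by move=> /ii_iii /iii_i.
- exact ii_iii.
- by move=> /iii_i /i_ii.
- by move=> /i_ii /ii_iii.
- exact iii_i.
Qed.
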